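(* Let $\mathbb{K}\in\{\mathbb{R},\mathbb{C}\}$, $F$ a locally convex topological $\mathbb{K}$-vector space, $E$ a topological $\mathbb{K}$-vector space, $U\subseteq E$ open and $\sigma\in\,]0,1]$. Let $W\subseteq\mathbb{K}$ be an open neighbourhood of $[0,1]$ and $h\colon U\times W\to F$ a $C^{1,\sigma}_{MB}$-map. Suppose that the weak integral $g(x):=\int_0^1h(x,t)\,dt$ exists in $F$ for each $x\in U$ and defines a map $g\colon U\to F$ which is $C^{1,\sigma}_{MB}$. Then the weak integral $\int_0^1 d_1h(x,y,t)\,dt$ exists in $F$ for all $x\in U$ and $y\in E$, and $\int_0^1 d_1h(x,y,t)\,dt=dg(x,y)$, where $d_1h(x,y,t):=d(h(\cdot,t))(x,y)$.
   Context: Vector spaces Hausdorff; usual absolute value on $\mathbb{K}$. Gauge on a topological $\mathbb{K}$-vector space $X$: $q\colon X\to[0,\infty[$ with $q(tx)=|t|q(x)$ and each $\{q<r\}$ a $0$-neighbourhood. A map $\phi$ on a subset $V\subseteq X$ is $C^{0,\sigma}$ if for every $x_0\in V$ and gauge $q$ on the target there exist a gauge $p$ on $X$ and a neighbourhood $V_0$ of $x_0$ in $V$ with $q(\phi(y)-\phi(x))\le p(y-x)^\sigma$ for $x,y\in V_0$. For $\phi$ on an open subset $V$ of $X$: $\phi$ is $C^{1,\sigma}_{MB}$ if $\phi$ is $C^{0,\sigma}$, the directional derivative $d\phi(x,y):=\frac{d}{dt}\big|_{t=0}\phi(x+ty)$ ($t\in\mathbb{K}$) exists for all $x\in V$, $y\in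 X$, and $d\phi\colon V\times X\to F$ is $C^{0,\sigma}$. Here $U\times W$ is open in $E\times\mathbb{K}$. Weak integral: for continuous $\gamma\colon[0,1]\to F$, $z\in F$ is the weak integral $\int_0^1\gamma(t)\,dt$ if $\lambda(z)=\int_0^1\lambda(\gamma(t))\,dt$ for every continuous linear $\lambda\colon F\to\mathbb{K}$. *)

From HB Require Import structures.
From mathcomp Require Import all_boot all_order all_algebra.
From mathcomp Require Import all_classical all_reals all_analysis.
From mathcomp Require Export complex.
Import Order.TTheory GRing.Theory Num.Theory.
Import numFieldNormedType.Exports.
Set Implicit Arguments. Unset Strict Implicit. Unset Printing Implicit Defensive.
Local Open Scope classical_set_scope.
Local Open Scope ring_scope.

HB.instance Definition _ (K : numFieldType) (X Y : preTopologicalLmodType K) :=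
  GRing.Lmodule.on (X * Y)%type.

(* The complex numbers C = R[i] over a real field R, as a numFieldType
   (so that it gets its standard norm topology). *)
Definition Cplx (R : realType) : numFieldType := R[i].

(* Throughout: R is the real field, K the scalar field (R or C),
   absK : K -> R the absolute value of K, emb : R -> K the inclusion R ⊆ K,
   kint f = \int_0^1 f(t) dt for a K-valued function f on [0,1]. *)

Definition gauge (R : realType) (K : numFieldType) (absK : K -> R)
    (X : preTopologicalLmodType K) (q : X -> R) : Prop :=
  (forall x, 0 <= q x) /\
  (forall (t : K) (x : X), q (t *: x) = absK t * q x) /\
  (forall r : R, 0 < r -> nbhs (0 : X) [set x | q x < r]).

Definition C0sigma (R : realType) (K : numFieldType) (absK : K -> R)
    (X Y : preTopologicalLmodType K) (V : set X) (phi : X -> Y) (sigma : R) : Prop :=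
  forall x0, V x0 -> forall q : Y -> R, gauge absK q ->
    exists p : X -> R, gauge absK p /\
      exists N : set X, nbhs x0 N /\
        forall x y, V x -> N x -> V y -> N y ->
          q (phi y - phi x) <= powR (p (y - x)) sigma.

Definition dirder (K : numFieldType) (X Y : preTopologicalLmodType K)
    (phi : X -> Y) (x y : X) (l : Y) : Prop :=
  (fun t : K => t^-1 *: (phi (x + t *: y) - phi x)) @ (0 : K)^' --> l.

Definition C1sigmaMB (R : realType) (K : numFieldType) (absK : K -> R)
    (X Y : preTopologicalLmodType K) (V : set X) (phi : X -> Y) (sigma : R) : Prop :=
  C0sigma absK V phi sigma /\
  exists dphi : X * X -> Y,
    (forall x y, V x -> dirder phi x y (dphi (x, y))) /\
    C0sigma absK (V `*` setT) dphi sigma.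

Definition weak_integral (R : realType) (K : numFieldType)
    (kint : (R -> K) -> K) (Y : preTopologicalLmodType K)
    (gam : R -> Y) (z : Y) : Prop :=
  {within `[0%R, 1%R], continuous gam} /\
  forall lam : Y -> K,
    (forall (a : K) (u v : Y), lam (a *: u + v) = a * lam u + lam v) ->
    continuous lam ->
    lam z = kint (lam \o gam).

Definition Rint01 (R : realType) (f : R -> R) : R :=
  Rintegral lebesgue_measure `[0%R, 1%R] f.

Definition Cint01 (R : realType) (f : R -> Cplx R) : Cplx R :=
  ((Rint01 (fun t => @complex.Re R (f t)))%:C + 'i * (Rint01 (fun t => @complex.Im R (f t)))%:C)%C.

From HB Require Import structures.
From mathcomp Require Import all_boot all_order all_algebra.
From mathcomp Require Import all_classical all_reals all_analysis.
From mathcomp Require Import complex.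
Import Order.TTheory GRing.Theory Num.Theory.
Import numFieldNormedType.Exports.
Local Open Scope classical_set_scope.
Local Open Scope ring_scope.
Set Implicit Arguments. Unset Strict Implicit.

(** Fix a continuous linear functional lam on F and a real coordinate c of K
  (the identity for K = R, the real or imaginary part for K = C), and put
  mu = c o lam.  The real function u |-> mu (g (x + u y)) equals
  u |-> \int_0^1 mu (h (x + u y, t)) dt near 0.  Its derivative at 0 is
  mu (dg (x, y)) by assumption, and, differentiating under the integral sign,
  it is also \int_0^1 mu (d_1 h (x, y, t)) dt.  The domination this requires,
  and the continuity of t |-> d_1 h (x, y, t), both come from dh being
  C^{0,sigma}: using the Minkowski functional of a balanced 0-neighbourhood as
  a gauge, a C^{0,sigma} map is continuous, hence mu o dh is bounded on the
  compact set of points ((x + u y, t), (y, 0)) with |u| <= r and t in [0, 1].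
  Since the real coordinates separate the points of K, the identity for every
  mu gives the weak integral. *)

Lemma ltr_half (R : numFieldType) (d : R) : 0 < d -> d / 2 < d.
Proof. by move=> d0; rewrite ltr_pdivrMr // ltr_pMr // ltr1n. Qed.

Lemma dirder_pair1 (K : numFieldType) (X1 X2 Y : preTopologicalLmodType K)
    (phi : X1 * X2 -> Y) (x : X1) (s : X2) (y : X1) (l : Y) :
  dirder phi (x, s) (y, 0) l = dirder (fun z => phi (z, s)) x y l.
Proof.
rewrite /dirder.
suff -> : (fun t : K => t^-1 *: (phi ((x, s) + t *: (y, 0)) - phi (x, s))) =
  (fun t => t^-1 *: (phi (x + t *: y, s) - phi (x, s))) by [].
by apply/funext => t; congr (_ *: (phi _ - _)); congr (_, _); rewrite /= scaler0 addr0.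
Qed.

Section linear_form.
Variables (K : pzRingType) (Y : lmodType K) (lam : Y -> K).
Hypothesis lamL : forall (a : K) (u v : Y), lam (a *: u + v) = a * lam u + lam v.

Lemma linear_form0 : lam 0 = 0.
Proof.
have := lamL 1 0 0; rewrite scale1r addr0 mul1r -{1}[lam 0]addr0.
by move/addrI/esym.
Qed.

Lemma linear_formZ a u : lam (a *: u) = a * lam u.
Proof. by rewrite -[a *: u]addr0 lamL linear_form0 addr0. Qed.

Lemma linear_formB u v : lam (u - v) = lam u - lam v.
Proof. by rewrite addrC -scaleN1r lamL mulN1r addrC. Qed.

End linear_form.

Section topological_module.
Variables (K : numFieldType) (Y : topologicalLmodType K).

Lemma lmod_scaler_continuous (k : K) : continuous (fun w : Y => k *: w).
Proof.
move=> w; apply: (@continuous_comp _ _ _ (fun w => (k : K^o, w))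
  (fun z : K^o * Y => z.1 *: z.2)); last exact: scale_continuous.
by apply: (@cvg_pair _ _ _ (nbhs w) (nbhs (k : K^o)) (nbhs w)); [exact: cvg_cst | exact: cvg_id].
Qed.

Lemma lmod_scalel_continuous (w : Y) : continuous (fun s : K => s *: w).
Proof.
move=> s; apply: (@continuous_comp _ _ _ (fun s => (s : K^o, w))
  (fun z : K^o * Y => z.1 *: z.2)); last exact: scale_continuous.
by apply: (@cvg_pair _ _ _ (nbhs s) (nbhs (s : K^o)) (nbhs w)); [exact: cvg_id | exact: cvg_cst].
Qed.

Lemma lmod_addl_continuous (m : Y) : continuous (fun w : Y => m + w).
Proof.
move=> w; apply: (@continuous_comp _ _ _ (fun w => (m, w))
  (fun z : Y * Y => z.1 + z.2)); last exact: add_continuous.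
by apply: (@cvg_pair _ _ _ (nbhs w) (nbhs m) (nbhs w)); [exact: cvg_cst | exact: cvg_id].
Qed.

End topological_module.

Section scalar_field.
Variables (R : realType) (K : numFieldType) (absK : K -> R) (emb : {rmorphism R -> K}).
Hypothesis normE : forall z, `|z| = emb (absK z).
Hypothesis ler_emb : {mono emb : a b / a <= b}.

Lemma ltr_emb : {mono emb : a b / a < b}.
Proof. by move=> a b; rewrite !lt_def ler_emb (inj_eq (fmorph_inj emb)). Qed.

Lemma absK_emb a : absK (emb a) = `|a|.
Proof.
apply: (fmorph_inj emb); rewrite -normE.
have [a0|a0] := leP 0 a; first by rewrite !ger0_norm // -(rmorph0 emb) ler_emb.
by rewrite !ltr0_norm ?rmorphN // -(rmorph0 emb) ltr_emb.
Qed.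

Lemma absK_ge0 z : 0 <= absK z.
Proof. by rewrite -ler_emb rmorph0 -normE. Qed.

Lemma absKM a b : absK (a * b) = absK a * absK b.
Proof. by apply: (fmorph_inj emb); rewrite rmorphM -!normE normrM. Qed.

Lemma absK_gt0 z : (0 < absK z) = (z != 0).
Proof. by rewrite -ltr_emb rmorph0 -normE normr_gt0. Qed.

Lemma nbhs_absKP (z : K) (P : set K) :
  nbhs z P <-> exists2 d : R, 0 < d & forall s, absK (z - s) < d -> P s.
Proof.
split=> [/nbhs_ballP [e /= e0 zeP]|[d d0 zdP]].
  exists (absK e); first by rewrite absK_gt0 gt_eqF.
  by move=> s zs; apply: zeP; rewrite /ball /= -(gtr0_norm e0) !normE ltr_emb.
apply/nbhs_ballP; exists (emb d); first by rewrite /= -(rmorph0 emb) ltr_emb.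
by move=> s; rewrite /ball /= normE ltr_emb; exact: zdP.
Qed.

Lemma nbhs0_absKP (P : set K) :
  nbhs 0 P <-> exists2 d : R, 0 < d & forall s, absK s < d -> P s.
Proof.
have absK0B s : absK (0 - s) = absK s.
  by apply: (fmorph_inj emb); rewrite -!normE sub0r normrN.
rewrite nbhs_absKP; split=> -[d d0 dP]; exists d => // s.
  by rewrite -absK0B; exact: dP.
by rewrite absK0B; exact: dP.
Qed.

Lemma emb_continuous : continuous emb.
Proof.
move=> a A /nbhs_absKP [d d0 adA]; apply/nbhs_ballP; exists d => // b ab.
by apply: adA; rewrite -rmorphB absK_emb.
Qed.

Lemma emb_nbhs' : emb @ (0 : R)^' `=>` (0 : K)^'.
Proof.
move=> A /nbhs0_absKP [d d0 dA]; apply/nbhs_ballP; exists d => // r /=.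
rewrite /ball /= sub0r normrN => rd rn0; apply: dA; last by rewrite fmorph_eq0.
by rewrite absK_emb.
Qed.

Lemma affine_line_continuous (Y : topologicalLmodType K) (p v : Y) :
  continuous (fun u : R => p + emb u *: v).
Proof.
move=> u; apply: (@continuous_comp _ _ _ (fun u => emb u *: v) (fun w => p + w)).
  apply: (@continuous_comp _ _ _ emb (fun s => s *: v)); first exact: emb_continuous.
  exact: lmod_scalel_continuous.
exact: lmod_addl_continuous.
Qed.

Section gauge.
Variable Y : topologicalLmodType K.

Definition balanced_core (N : set Y) : set Y :=
  [set w | forall s : K, absK s <= 1 -> N (s *: w)].

Lemma nbhs0_balanced_core (N : set Y) : nbhs 0 N -> nbhs 0 (balanced_core N).
Proof.
move=> N0; have : nbhs ((0 : K^o) *: (0 : Y)) N by rewrite scaler0.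
move=> /(@scale_continuous K Y (0, 0)) [[A B] /= [/nbhs0_absKP [d d0 dA] B0] ABN].
have c0 : emb (d / 2) != 0 by rewrite fmorph_eq0 gt_eqF ?divr_gt0.
have : nbhs (0 : Y) [set w | B ((emb (d / 2))^-1 *: w)].
  by apply: (@lmod_scaler_continuous _ _ _ 0); rewrite scaler0.
apply: filterS => w Bw s s1.
rewrite -[w](scalerKV c0) scalerA; apply: (ABN (_, _)); split => //=.
apply: dA; rewrite absKM absK_emb gtr0_norm ?divr_gt0 //.
apply: le_lt_trans (ler_piMl _ s1) (ltr_half d0).
by rewrite divr_ge0 ?ltW.
Qed.

Definition minkowski (V : set Y) (v : Y) : R :=
  inf [set absK t | t in [set t : K | t != 0 /\ V (t^-1 *: v)]].

Section minkowski.
Variable V : set Y.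
Hypothesis V0 : nbhs 0 V.

Let S v := [set absK t | t in [set t : K | t != 0 /\ V (t^-1 *: v)]].

Let S_lbound v : has_lbound (S v).
Proof. by exists 0 => _ [t _ <-]; exact: absK_ge0. Qed.

(* 0-neighbourhoods are absorbing. *)
Let S_neq0 v : S v !=set0.
Proof.
have : nbhs ((0 : K) *: v) V by rewrite scale0r.
move=> /(@lmod_scalel_continuous _ _ v 0) /nbhs0_absKP [d d0 dV].
have d20 : 0 < d / 2 by rewrite divr_gt0.
exists (absK (emb (d / 2))^-1), (emb (d / 2))^-1 => //; split.
  by rewrite invr_eq0 fmorph_eq0 gt_eqF.
by rewrite invrK; apply: dV; rewrite absK_emb gtr0_norm // ltr_half.
Qed.

Lemma minkowski_ge0 v : 0 <= minkowski V v.
Proof.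
by apply: lb_le_inf; first exact: S_neq0; move=> _ [t _ <-]; exact: absK_ge0.
Qed.

Lemma minkowski_le v t : t != 0 -> V (t^-1 *: v) -> minkowski V v <= absK t.
Proof. by move=> t0 Vt; apply: ge_inf; [exact: S_lbound | exists t]. Qed.

Lemma minkowski_lt v r : minkowski V v < r ->
  exists t, [/\ t != 0, V (t^-1 *: v) & absK t < r].
Proof. by move=> /(inf_lt (S_neq0 v)) [_ [t [t0 Vt] <-] tr]; exists t. Qed.

Let minkowskiZ_neq0 a v : a != 0 -> minkowski V (a *: v) = absK a * minkowski V v.
Proof.
have le a' v' : a' != 0 -> minkowski V (a' *: v') <= absK a' * minkowski V v'.
  move=> a'0; have a'_gt0 : 0 < absK a' by rewrite absK_gt0.
  rewrite -ler_pdivrMl //; apply: lb_le_inf; first exact: S_neq0.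
  move=> _ [t [t0 Vt] <-]; rewrite ler_pdivrMl // -absKM.
  apply: minkowski_le; first by rewrite mulf_neq0.
  by rewrite invfM scalerA mulrAC mulVf // mul1r.
move=> a0; apply/le_anti; rewrite le //=.
have := le a^-1 (a *: v); rewrite scalerA mulVf // scale1r => /(_ (invr_neq0 a0)).
move/(ler_wpM2l (absK_ge0 a)); rewrite mulrA -absKM mulfV //.
by rewrite -(rmorph1 emb) absK_emb normr1 mul1r.
Qed.

Lemma minkowski0 : minkowski V 0 = 0.
Proof.
(* minkowski V 0 = minkowski V (2 *: 0) = 2 * minkowski V 0 *)
have e2 : emb 2 != 0 by rewrite fmorph_eq0 pnatr_eq0.
have := minkowskiZ_neq0 0 e2; rewrite scaler0 absK_emb normr_nat mulr_natl mulr2n.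
by rewrite -{1}[minkowski V 0]addr0 => /addrI/esym.
Qed.

Lemma minkowskiZ a v : minkowski V (a *: v) = absK a * minkowski V v.
Proof.
have [->|] := eqVneq a 0; last exact: minkowskiZ_neq0.
by rewrite scale0r minkowski0 -(rmorph0 emb) absK_emb normr0 mul0r.
Qed.

Lemma nbhs0_minkowski_lt r : 0 < r -> nbhs 0 [set v | minkowski V v < r].
Proof.
move=> r0; have r20 : 0 < r / 2 by rewrite divr_gt0.
have k0 : emb (r / 2) != 0 by rewrite fmorph_eq0 gt_eqF.
have : nbhs (0 : Y) [set v | V ((emb (r / 2))^-1 *: v)].
  by apply: (@lmod_scaler_continuous _ _ _ 0); rewrite scaler0.
apply: filterS => v Vv /=; apply: le_lt_trans (minkowski_le k0 Vv) _.
by rewrite absK_emb gtr0_norm // ltr_half.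
Qed.

Lemma gauge_minkowski : gauge absK (minkowski V).
Proof.
by do ![split]; [exact: minkowski_ge0 | exact: minkowskiZ | exact: nbhs0_minkowski_lt].
Qed.

End minkowski.

Lemma gauge_nbhs0 (N : set Y) : nbhs 0 N ->
  exists q : Y -> R, gauge absK q /\ forall v, q v < 1 -> N v.
Proof.
move=> /nbhs0_balanced_core N0; exists (minkowski (balanced_core N)).
split=> [|v]; first exact: gauge_minkowski.
move=> /(minkowski_lt N0) [t [t0 Nt t1]].
by have := Nt t (ltW t1); rewrite scalerA mulfV // scale1r.
Qed.

End gauge.

(* Subtraction need not be continuous on X (products only carry a
   pretopological module structure), hence the last hypothesis. *)
Lemma C0sigma_cvg (X : preTopologicalLmodType K) (Y : topologicalLmodType K)
    (V : set X) (phi : X -> Y) (sigma : R) (x0 : X) (G : set_system X) {FG : Filter G} :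
  0 < sigma -> C0sigma absK V phi sigma -> V x0 ->
  G V -> G --> x0 -> (fun x => x - x0) @ G --> 0 -> phi @ G --> phi x0.
Proof.
move=> s0 phiC Vx0 GV Gx0 G0 M /= Mx0.
have : nbhs (0 : Y) [set w | M (phi x0 + w)].
  by have := @lmod_addl_continuous _ Y (phi x0) 0 M; rewrite addr0; apply.
move=> /gauge_nbhs0 [q [gq qM]].
have [p [gp [N [Nx0 pN]]]] := phiC x0 Vx0 q gq.
have Gp : G [set x | p (x - x0) < 1] := G0 _ (gp.2.2 _ ltr01).
apply: filterS (filterI GV (filterI (Gx0 _ Nx0) Gp)) => z [Vz [Nz pz]].
rewrite /= -[phi z](addrNK (phi x0)) addrC; apply: qM.
apply: le_lt_trans (pN _ _ Vx0 (nbhs_singleton Nx0) Vz Nz) _.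
have -> : (1 : R) = powR 1 sigma by rewrite powR1.
by apply: gt0_ltr_powR => //; rewrite nnegrE //; exact: gp.1.
Qed.

Section real_functional.
Variables (Y : topologicalLmodType K) (mu : Y -> R).
Hypotheses (mu_cont : continuous mu) (muB : forall w w', mu (w - w') = mu w - mu w').
Hypothesis muZ : forall r w, mu (emb r *: w) = r * mu w.

Lemma is_derive_dirder (X : preTopologicalLmodType K) (phi : X -> Y) (p v : X) (u : R)
    (l : Y) :
  dirder phi (p + emb u *: v) v l ->
  is_derive u 1 (fun r => mu (phi (p + emb r *: v))) (mu l).
Proof.
move=> phil; have := cvg_comp _ _ emb_nbhs' (cvg_comp _ _ phil (@mu_cont l)).
set q := (X in X @ _ --> _ -> _).
have -> : q = fun r => r^-1 *: (((fun r => mu (phi (p + emb r *: v))) \o shift u) (r *: 1)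
                        - mu (phi (p + emb u *: v))).
  apply/funext => r; rewrite /q /= -fmorphV muZ muB [r%:A]mulr1 rmorphD scalerDl.
  by rewrite [emb r *: v + _]addrC addrA.
by move=> ql; apply: DeriveDef; [exact: cvgP ql | exact: cvg_lim ql].
Qed.

End real_functional.

Section differentiation_under_weak_integral.
Variables (E F : topologicalLmodType K) (U : set E) (W : set K^o) (sigma : R).
Variables (h : E * K^o -> F) (dh : (E * K^o) * (E * K^o) -> F) (x y : E).
Hypotheses (oU : open U) (sigma_gt0 : 0 < sigma).
Hypothesis W01 : forall t, 0 <= t <= 1 -> W (emb t).
Hypothesis dh_dirder : forall p v, (U `*` W) p -> dirder h p v (dh (p, v)).
Hypothesis dh_C0 : C0sigma absK ((U `*` W) `*` setT) dh sigma.
Hypothesis Ux : U x.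

Let v : E * K^o := (y, 0).
Let line t u : E * K^o := (x, emb t) + emb u *: v.
Let path (ut : R * R) := (line ut.2 ut.1, v).
Let rect r : set (R * R) := `[- r, r] `*` `[0, 1].

Lemma lineE t u : line t u = (x + emb u *: y, emb t).
Proof. by rewrite /line /v; congr (_, _); rewrite /= scaler0 addr0. Qed.

Lemma line_radius : exists2 r : R, 0 < r & forall u, `|u| <= r -> U (x + emb u *: y).
Proof.
have : nbhs (x + emb 0 *: y) U by rewrite rmorph0 scale0r addr0; exact: open_nbhs_nbhs.
move=> /affine_line_continuous /nbhs_ballP [e /= e0 eU].
exists (e / 2) => [|u ur]; first by rewrite divr_gt0.
by apply: eU; rewrite /ball /= sub0r normrN (le_lt_trans ur) // ltr_half.
Qed.

Section rectangle.
Variable r : R.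
Hypothesis Ur : forall u, `|u| <= r -> U (x + emb u *: y).

Lemma path_domain ut : rect r ut -> ((U `*` W) `*` setT) (path ut).
Proof.
case: ut => u t; rewrite /rect /= !in_itv /= -ler_norml => -[ur t01].
by rewrite scaler0 addr0; split=> //; split; [exact: Ur | exact: W01].
Qed.

End rectangle.

Let path_cvg (f1 f2 : R * R -> R) (b : E) (c : E * K^o) (z : R * R) :
  {for z, continuous f1} -> {for z, continuous f2} ->
  (fun w => ((b + emb (f1 w) *: y, emb (f2 w)), c)) @ z -->
    ((b + emb (f1 z) *: y, emb (f2 z)), c).
Proof.
move=> f1z f2z; apply: (@cvg_pair _ _ _ (nbhs z)
  (nbhs ((b + emb (f1 z) *: y, emb (f2 z)) : E * K^o)) (nbhs c)); last exact: cvg_cst.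
apply: (@cvg_pair _ _ _ (nbhs z) (nbhs (b + emb (f1 z) *: y)) (nbhs (emb (f2 z) : K^o))).
  apply: (@continuous_comp _ _ _ f1 (fun u => b + emb u *: y)) => //.
  exact: affine_line_continuous.
by apply: (@continuous_comp _ _ _ f2 emb) => //; exact: emb_continuous.
Qed.

Lemma path_continuous : continuous path.
Proof.
move=> z; have -> : path = fun w => ((x + emb w.1 *: y, emb w.2), v).
  by apply/funext => w; rewrite /path lineE.
by apply: path_cvg; [exact: cvg_fst | exact: cvg_snd].
Qed.

Lemma path_sub_cvg0 z : (fun w => path w - path z) @ z --> 0.
Proof.
have -> : (fun w => path w - path z) =
    fun w => ((0 + emb (w.1 - z.1) *: y, emb (w.2 - z.2)), 0).
  apply/funext => w; rewrite /path !lineE.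
  congr ((_, _), _); rewrite /= ?subrr // !rmorphB // add0r scalerBl.
  by rewrite opprD addrACA subrr add0r.
have -> : (0 : (E * K^o) * (E * K^o)) = ((0 + emb (z.1 - z.1) *: y, emb (z.2 - z.2)), 0).
  by rewrite !subrr rmorph0 scale0r addr0.
by apply: path_cvg; apply: cvgB;
  [exact: cvg_fst | exact: cvg_cst | exact: cvg_snd | exact: cvg_cst].
Qed.

Lemma dh_path_cvg r (z : R * R) (G : set_system (R * R)) {FG : Filter G} :
  (forall u, `|u| <= r -> U (x + emb u *: y)) ->
  rect r z -> G (rect r) -> G --> z -> (dh \o path) @ G --> dh (path z).
Proof.
move=> Ur rz Gr Gz.
apply: (C0sigma_cvg (G := path @ G) sigma_gt0 dh_C0 (path_domain Ur rz)).
- exact: filterS (fun w => @path_domain r Ur w) Gr.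
- exact: cvg_trans (cvg_app _ Gz) (@path_continuous z).
- exact: cvg_trans (cvg_app _ Gz) (path_sub_cvg0 z).
Qed.

Lemma dh_line_continuous : {within `[0, 1], continuous (fun t => dh ((x, emb t), v))}.
Proof.
have -> : (fun t => dh ((x, emb t), v)) = (fun t => dh (line t 0, v)).
  by apply/funext => t; rewrite lineE rmorph0 scale0r addr0.
have [r r0 Ur] := line_radius.
have rect0 t : 0 <= t <= 1 -> rect r (0, t).
  by move=> t01; split => //=; rewrite in_itv /= oppr_le0 ltW.
apply/subspace_continuousP => t0 t01.
pose G := (fun t : R => (0 : R, t)) @ within `[0, 1] (nbhs t0).
have Gr : G (rect r).
  rewrite /G /= /within; apply: (@filterE _ (nbhs t0)) => t.
  by rewrite /= in_itv; exact: rect0.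
have Gt0 : G --> (0, t0).
  rewrite /G; apply: (@cvg_within_filter _ _ _ (nbhs t0)).
  by apply: (@cvg_pair _ _ _ (nbhs t0) (nbhs (0 : R)) (nbhs t0));
    [exact: cvg_cst | exact: cvg_id].
by have := dh_path_cvg Ur (rect0 _ _) Gr Gt0; apply.
Qed.

Section projection.
Variables (g : E -> F) (l : F) (mu : F -> R).
Hypotheses (mu_cont : continuous mu) (muB : forall w w', mu (w - w') = mu w - mu w').
Hypothesis muZ : forall r w, mu (emb r *: w) = r * mu w.
Hypothesis h_cont : forall x', U x' -> {within `[0, 1], continuous (fun t => h (x', emb t))}.
Hypothesis mu_g : forall x', U x' -> mu (g x') = Rint01 (fun t => mu (h (x', emb t))).
Hypothesis gl : dirder g x y l.

Let f u t := mu (h (line t u)).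

Lemma is_derive_line u t : U (x + emb u *: y) -> 0 <= t <= 1 ->
  is_derive u (1 : R) (f^~ t) (mu (dh (line t u, v))).
Proof.
move=> Uu t01; apply: (is_derive_dirder mu_cont muB muZ (p := (x, emb t)) (v := v)).
by apply: dh_dirder; rewrite -/(line t u) lineE; split; [exact: Uu | exact: W01].
Qed.

Lemma line_integrand_continuous u : U (x + emb u *: y) -> {within `[0, 1], continuous (f u)}.
Proof.
move=> Uu; have -> : f u = mu \o (fun t => h (x + emb u *: y, emb t)).
  by apply/funext => t; rewrite /f lineE.
by move=> t; exact: (continuous_comp (@h_cont _ Uu t) (@mu_cont _)).
Qed.

Lemma bounded_dh_path r : (forall u, `|u| <= r -> U (x + emb u *: y)) ->
  exists M, forall ut, rect r ut -> `|mu (dh (path ut))| <= M.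
Proof.
move=> Ur; have : {within rect r, continuous (mu \o (dh \o path))}.
  apply/subspace_continuousP => z rz.
  exact: cvg_comp (dh_path_cvg Ur rz (withinT _ _) (cvg_within _)) (@mu_cont _).
move=> /continuous_compact.
move=> /(_ (compact_setX (@segment_compact R (- r) r) (@segment_compact R 0 1))).
move=> /compact_bounded [M [_ HM]]; exists (M + 1) => ut rut.
by apply: (HM (M + 1)); [rewrite ltrDl | exists ut].
Qed.

Lemma cvg_Rint01_line :
  (fun s => s^-1 *: (Rint01 (f (s + 0)) - Rint01 (f 0))) @ 0^' -->
    Rint01 (fun t => mu (dh (line t 0, v))).
Proof.
have [r r0 Ur] := line_radius.
have [M Mb] := bounded_dh_path Ur.
have inI u : `]- r, r[%classic u -> `|u| <= r.
  by rewrite /= in_itv /= => /andP [ru ur]; rewrite ler_norml !ltW.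
have rectI u t : `|u| <= r -> 0 <= t <= 1 -> rect r (u, t).
  by move=> ur t01; split; rewrite /= in_itv //= -ler_norml.
have f_int u : `]- r, r[%classic u -> lebesgue_measure.-integrable `[0, 1] (EFin \o f u).
  move=> /inI /Ur Uu; apply: continuous_compact_integrable; first exact: segment_compact.
  exact: line_integrand_continuous.
have f_derivable u t : `]- r, r[%classic u -> `[0, 1]%classic t -> derivable (f^~ t) u 1.
  move=> /inI /Ur Uu; rewrite /= in_itv /= => t01.
  by move: (is_derive_line Uu t01) => fd; exact: ex_derive.
have M_ge0 : 0 <= M.
  apply: le_trans (Mb (0, 0) _); first exact: normr_ge0.
  by apply: rectI; [rewrite normr0 ltW | rewrite lexx ler01].
have M_int : lebesgue_measure.-integrable `[0, 1] (EFin \o cst M).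
  apply: continuous_compact_integrable; first exact: segment_compact.
  exact/continuous_subspaceT/cst_continuous.
have df_bound u t : `]- r, r[%classic u -> `[0, 1]%classic t ->
    `|partial1of2 f u t| <= cst M t.
  move=> /inI ur; rewrite /= in_itv /= => t01.
  move: (is_derive_line (Ur u ur) t01) => fd.
  by rewrite partial1of2E derive_val; exact: Mb (rectI _ _ ur t01).
have -> : Rint01 (fun t => mu (dh (line t 0, v))) = Rint01 (partial1of2 f 0).
  have U0 : U (x + emb 0 *: y) by apply: Ur; rewrite normr0 ltW.
  apply: eq_Rintegral => t /set_mem; rewrite /= in_itv => t01.
  by move: (is_derive_line U0 t01) => fd; rewrite derive1E derive_val.
have m01 : measurable (`[0, 1]%classic : set (measurableTypeR R)) by exact: measurable_itv.
have I0 : `]- r, r[%classic 0 by rewrite /= in_itv /= oppr_lt0 r0.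
exact (cvg_differentiation_under_integral m01 I0 f_int
  f_derivable (fun=> M_ge0) M_int df_bound).
Qed.

Lemma dirder_Rint01 : mu l = Rint01 (fun t => mu (dh ((x, emb t), v))).
Proof.
have -> : (fun t => mu (dh ((x, emb t), v))) = (fun t => mu (dh (line t 0, v))).
  by apply/funext => t; rewrite lineE rmorph0 scale0r addr0.
pose G r := mu (g (x + emb r *: y)).
have gd : is_derive 0 (1 : R) G (mu l).
  by apply: (is_derive_dirder mu_cont muB muZ); rewrite rmorph0 scale0r addr0.
have limG : (fun s : R => s^-1 *: ((G \o shift 0) (s *: 1) - G 0)) @ 0^' --> mu l.
  by rewrite -(@derive_val _ _ _ _ _ _ _ gd); exact: (@ex_derive _ _ _ _ _ _ _ gd).
have GE : \forall s \near (0 : R), G s = Rint01 (f s).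
  have : nbhs (0 : R) [set s | U (x + emb s *: y)].
    have := @affine_line_continuous _ x y 0 U; rewrite rmorph0 scale0r addr0.
    by apply; exact: open_nbhs_nbhs.
  apply: filterS => s Us.
  by rewrite /G mu_g //; congr Rint01; apply/funext => t; rewrite /f lineE.
have limF : (fun s : R => s^-1 *: ((G \o shift 0) (s *: 1) - G 0)) @ 0^' -->
    Rint01 (fun t => mu (dh (line t 0, v))).
  apply: (cvg_trans _ cvg_Rint01_line); apply: near_eq_cvg.
  apply: cvg_within; have G0 := nbhs_singleton GE.
  by apply: filterS GE => s Gs /=; rewrite [s%:A]mulr1 addr0 Gs G0.
by apply: (cvg_unique _ limG limF); exact: norm_hausdorff.
Qed.

End projection.

End differentiation_under_weak_integral.

(* coord enumerates real coordinates of K that separate points (the identity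
   for R, real and imaginary parts for C); kint is computed coordinatewise. *)
Section weak_integral.
Variables (coord : bool -> K -> R) (kint : (R -> K) -> K).
Hypothesis coordD : forall i z w, coord i (z + w) = coord i z + coord i w.
Hypothesis coordZ : forall i a z, coord i (emb a * z) = a * coord i z.
Hypothesis coord_le : forall i z, `|coord i z| <= absK z.
Hypothesis coord_inj : forall z w, (forall i, coord i z = coord i w) -> z = w.
Hypothesis coord_kint : forall i f, coord i (kint f) = Rint01 (coord i \o f).

Lemma coordB i z w : coord i (z - w) = coord i z - coord i w.
Proof.
apply: (@addrI _ (coord i w)); rewrite -coordD.
by rewrite addrCA subrr addr0 addrCA subrr addr0.
Qed.

Lemma coord_continuous i : continuous (coord i).
Proof.
move=> z A /nbhs_ballP [d /= d0 dA]; apply/nbhs_absKP; exists d => // s zs.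
by apply: dA; rewrite /ball /= -coordB (le_lt_trans (coord_le _ _)).
Qed.

Theorem dirder_weak_integral (E F : topologicalLmodType K) (U : set E) (W : set K^o)
    (sigma : R) (h : E * K^o -> F) (g : E -> F) (x y : E) (l : F) (D : R -> F) :
  hausdorff_space F -> open U -> 0 < sigma -> (forall t, 0 <= t <= 1 -> W (emb t)) ->
  C1sigmaMB absK (U `*` W) h sigma ->
  (forall x', U x' -> weak_integral kint (fun t => h (x', emb t)) (g x')) ->
  U x -> dirder g x y l ->
  (forall t, 0 <= t <= 1 -> dirder (fun z => h (z, emb t)) x y (D t)) ->
  weak_integral kint D l.
Proof.
move=> hF oU s0 W01 [_ [dh [dh_dirder dh_C0]]] hg Ux gl hD.
have DE t : 0 <= t <= 1 -> D t = dh ((x, emb t), (y, 0)).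
  move=> t01; have := hD t t01; rewrite -dirder_pair1 => hDt.
  by apply: (cvg_unique hF hDt); apply: dh_dirder; split => //=; exact: W01.
split.
  apply: (subspace_eq_continuous _ (dh_line_continuous (y := y) oU s0 W01 dh_C0 Ux)).
  by move=> t /set_mem; rewrite /= in_itv => /DE; rewrite /from_subspace => ->.
move=> lam lamL lam_cont; apply: coord_inj => i; rewrite coord_kint.
pose mu := coord i \o lam.
have mu_cont : continuous mu.
  by move=> w; apply: continuous_comp; [exact: lam_cont | exact: coord_continuous].
have muB w w' : mu (w - w') = mu w - mu w' by rewrite /mu /= linear_formB ?coordB.
have muZ r w : mu (emb r *: w) = r * mu w by rewrite /mu /= linear_formZ ?coordZ.
have h_cont x' : U x' -> {within `[0, 1], continuous (fun t => h (x', emb t))}.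
  by move=> /hg [].
have mu_g x' : U x' -> mu (g x') = Rint01 (fun t => mu (h (x', emb t))).
  by move=> /hg [_ hgx]; rewrite /mu /= hgx // coord_kint.
change (mu l = Rint01 (mu \o D)).
rewrite (dirder_Rint01 oU s0 W01 dh_dirder dh_C0 Ux mu_cont muB muZ h_cont mu_g gl).
by apply: eq_Rintegral => t /set_mem; rewrite /= in_itv => /DE ->.
Qed.

End weak_integral.

End scalar_field.

Unset Implicit Arguments. Set Strict Implicit.

Theorem lemmaC6 (R : realType) :
  (* Case K = R *)
  (forall (E : topologicalLmodType R) (F : tvsType R),
     hausdorff_space E -> hausdorff_space F ->
     forall (U : set E) (W : set R^o) (sigma : R)
       (h : (E * R^o)%type -> F) (g : E -> F),
     open U -> 0 < sigma -> sigma <= 1 ->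
     open W -> (forall t : R, 0 <= t <= 1 -> W t) ->
     C1sigmaMB (fun t : R => `|t|) (U `*` W) h sigma ->
     (forall x, U x -> weak_integral (@Rint01 R) (fun t => h (x, t)) (g x)) ->
     C1sigmaMB (fun t : R => `|t|) U g sigma ->
     forall x, U x -> forall (y : E) (l : F), dirder g x y l ->
     forall D : R -> F,
       (forall t : R, 0 <= t <= 1 -> dirder (fun z => h (z, t)) x y (D t)) ->
       weak_integral (@Rint01 R) D l)
  /\
  (* Case K = C *)
  (forall (E : topologicalLmodType (Cplx R)) (F : tvsType (Cplx R)),
     hausdorff_space E -> hausdorff_space F ->
     forall (U : set E) (W : set (Cplx R)^o) (sigma : R)
       (h : (E * (Cplx R)^o)%type -> F) (g : E -> F),
     open U -> 0 < sigma -> sigma <= 1 ->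
     open W -> (forall t : R, 0 <= t <= 1 -> W (t%:C)%C) ->
     C1sigmaMB (fun z : Cplx R => Normc.normc z) (U `*` W) h sigma ->
     (forall x, U x ->
        weak_integral (@Cint01 R) (fun t => h (x, (t%:C)%C)) (g x)) ->
     C1sigmaMB (fun z : Cplx R => Normc.normc z) U g sigma ->
     forall x, U x -> forall (y : E) (l : F), dirder g x y l ->
     forall D : R -> F,
       (forall t : R, 0 <= t <= 1 ->
          dirder (fun z => h (z, (t%:C)%C)) x y (D t)) ->
       weak_integral (@Cint01 R) D l).
Proof.
split=> E F _ hF U W sigma h g oU s0 _ _ W01 hC hg _ x Ux y l gl D hD.
  apply: (dirder_weak_integral (emb := idfun) (coord := fun _ z => z)
    _ _ _ _ _ _ _ hF oU s0 W01 hC hg Ux gl hD) => //.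
  by move=> z w /(_ true).
apply: (dirder_weak_integral (emb := real_complex R)
  (coord := fun b z => if b then complex.Re z else complex.Im z)
  _ _ _ _ _ _ _ hF oU s0 W01 hC hg Ux gl hD).
- by move=> z; rewrite normc_def; case: z.
- by move=> a b; rewrite lecR.
- by move=> [] [a1 b1] [a2 b2].
- by move=> [] u [a b] /=; rewrite mul0r ?subr0 ?addr0.
- move=> [] [a b] /=; rewrite -sqrtr_sqr ler_wsqrtr //.
    by rewrite lerDl sqr_ge0.
  by rewrite lerDr sqr_ge0.
- by move=> [a1 b1] [a2 b2] H; have := H true; have := H false => /= -> ->.
- move=> [] f; rewrite /Cint01 /=.
    by rewrite mul0r mul1r subr0 addr0.
  by rewrite mul0r mul1r !add0r.
Qed.
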